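(* Let $p\ge2$ and $n=p-1$. Let $L$ be a linear subspace of $\mathrm{Sym}(p)$ with $L\cap\mathrm{Sym}_+(p)\neq\emptyset$ and $\dim L\le T_p-T_1=T_p-1$. Then $L$ is $n$-estimable.
   Context: $\mathrm{Sym}(p)$ denotes real symmetric $p\times p$ matrices, $\mathrm{Sym}_+(p)$ its positive definite elements, $T_k=k(k+1)/2$. $L$ is $n$-estimable if there exist $x^1,\dots,x^n\in\mathbb R^p$ such that $K=0$ is the only $K\in L$ with $Kx^i=0$ for all $i=1,\dots,n$. *)

(* real closed field R (elementarily equivalent to the reals). *)
From HB Require Import structures.
From mathcomp Require Import all_boot all_order all_algebra.
Set Implicit Arguments. Unset Strict Implicit. Unset Printing Implicit Defensive.
Import Order.TTheory GRing.Theory Num.Theory.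
Local Open Scope ring_scope.

Definition T (k : nat) : nat := (k * k.+1)./2.

Definition sym_mx (R : rcfType) (p : nat) (K : 'M[R]_p) : Prop := K^T = K.

Definition posdef (R : rcfType) (p : nat) (K : 'M[R]_p) : Prop :=
  sym_mx K /\ forall x : 'cV[R]_p, x != 0 -> 0 < (x^T *m K *m x) ord0 ord0.

Definition subspace_of_Sym (R : rcfType) (p : nat) (L : {vspace 'M[R]_p}) : Prop :=
  forall K, K \in L -> sym_mx K.

Definition estimable (R : rcfType) (p n : nat) (L : {vspace 'M[R]_p}) : Prop :=
  exists x : 'I_n -> 'cV[R]_p,
    forall K, K \in L -> (forall i, K *m x i = 0) -> K = 0.

From HB Require Import structures.
From mathcomp Require Import all_boot all_order all_algebra.
From mathcomp Require Import ring zify.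
Import Order.TTheory GRing.Theory Num.Theory.
Local Open Scope ring_scope.

(* Proof of Proposition 5.  Write e_i for the standard basis column vectors
   and rank1 w = w w^T.  Two cases, decided by a finite test:

   1. Every rank-one matrix e_a e_a^T and (e_a + e_b)(e_a + e_b)^T lies in L.
      Then L contains every symmetric unit matrix E_ab + E_ba, and these
      T p matrices (a <= b) are linearly independent, each having a private
      nonzero entry; hence dim L >= T p, contradicting dim L <= T p - 1.
   2. Some rank1 w lies outside L (so w <> 0, say w_a <> 0).  The p - 1 vectors
      w_a e_j - w_j e_a (j <> a) span the orthogonal complement of w.  A
      symmetric K killing all of them is a multiple c w w^T; if K is in L then
      c = 0, for otherwise w w^T = c^-1 K would be in L.  So L is
      (p - 1)-estimable. *)

Lemma T_bin2 (n : nat) : T n = 'C(n.+1, 2).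
Proof. by rewrite bin2 /T /= mulnC. Qed.

Lemma count_ord_le (n j : nat) :
  (\sum_(i < n | (i <= j)%N) 1)%N = minn n j.+1.
Proof.
elim: n => [|n IHn]; first by rewrite big_ord0.
rewrite big_mkcond /= big_ord_recr /= -big_mkcond /= IHn.
case: leqP; lia.
Qed.

Definition upper_pairs (n : nat) : pred ('I_n * 'I_n) :=
  [pred t : 'I_n * 'I_n | (t.1 <= t.2)%N].

Lemma card_upper_pairs (n : nat) : #|upper_pairs n| = T n.
Proof.
rewrite -sum1_card.
rewrite -(pair_big_dep xpredT (fun i j : 'I_n => (i <= j)%N) (fun _ _ => 1%N)).
rewrite (exchange_big_dep xpredT) //=.
under eq_bigr => j _ do rewrite count_ord_le.
rewrite T_bin2 -bin2_sum big_mkord big_ord_recl /= add0n.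
by apply: eq_bigr => j _; rewrite /bump /=; have := ltn_ord j; lia.
Qed.

Lemma private_entry_free (R : fieldType) (m n1 n2 : nat)
    (X : 'I_m -> 'M[R]_(n1, n2)) (pos : 'I_m -> 'I_n1 * 'I_n2) :
  (forall i j, (X j (pos i).1 (pos i).2 == 0) = (i != j)) ->
  free [tuple X i | i < m].
Proof.
move=> Xpos; apply/freeP => k.
rewrite (eq_bigr (fun j => k j *: X j)) => [sum0 i|j _]; last first.
  by rewrite -tnth_nth tnth_mktuple.
have := congr1 (fun M : 'M[R]_(n1, n2) => M (pos i).1 (pos i).2) sum0.
rewrite summxE /= mxE (bigD1 i) //= big1 => [|j ji]; last first.
  by rewrite mxE; apply/eqP; rewrite mulf_eq0 Xpos (eq_sym i) ji orbT.
rewrite addr0 mxE => /eqP.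
by rewrite mulf_eq0 Xpos eqxx orbF => /eqP.
Qed.

Definition unit_cv (R : pzRingType) (n : nat) (i : 'I_n) : 'cV[R]_n :=
  delta_mx i 0.
Arguments unit_cv {R n} i.

Definition rank1 (R : pzRingType) (n : nat) (w : 'cV[R]_n) : 'M[R]_n :=
  w *m w^T.
Arguments rank1 {R n} w.

Section SymmetricUnits.
Variables (R : numFieldType) (n : nat).

Definition sym_unit (t : 'I_n * 'I_n) : 'M[R]_n :=
  delta_mx t.1 t.2 + delta_mx t.2 t.1.

Lemma sym_unit_rank1 (a b : 'I_n) :
  sym_unit (a, b) = rank1 (unit_cv a + unit_cv b)
                    - rank1 (unit_cv a) - rank1 (unit_cv b).
Proof.
rewrite /rank1 /unit_cv !linearD /= !mulmxDl !trmx_delta !mul_delta_mx.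
by apply/matrixP => i j; rewrite !mxE; ring.
Qed.

Lemma sym_unit_entry (u t : 'I_n * 'I_n) :
  u \in upper_pairs n -> t \in upper_pairs n ->
  (sym_unit u t.1 t.2 == 0) = (t != u).
Proof.
case: u t => [u1 u2] [t1 t2]; rewrite !inE /= => le_u le_t.
have [[-> ->] | tu] := eqVneq (t1, t2) (u1, u2).
  by rewrite !mxE !eqxx /= -natrD pnatr_eq0 addn_eq0.
have swap_neq : ((t1 == u2) && (t2 == u1)) = false.
  apply/negbTE; move: tu; rewrite xpair_eqE -!(inj_eq val_inj) /=.
  by apply: contra => /andP [/eqP e1 /eqP e2]; apply/andP; split; apply/eqP; lia.
by rewrite !mxE -xpair_eqE (negbTE tu) swap_neq addr0 eqxx.
Qed.

Definition sym_basis : (#|upper_pairs n|).-tuple 'M[R]_n :=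
  [tuple sym_unit (enum_val i) | i < #|upper_pairs n|].

Lemma sym_basis_free : free sym_basis.
Proof.
apply: (@private_entry_free _ _ _ _ _ enum_val) => i j.
by rewrite sym_unit_entry ?enum_valP // (inj_eq enum_val_inj).
Qed.

Lemma rank1_units_dim (L : {vspace 'M[R]_n}) :
  (forall a b : 'I_n, rank1 (unit_cv a + unit_cv b) \in L) ->
  (forall a : 'I_n, rank1 (unit_cv a) \in L) ->
  (T n <= \dim L)%N.
Proof.
move=> rank1_sum rank1_unit.
have basis_sub : (<<sym_basis>> <= L)%VS.
  apply/span_subvP => _ /mapP [i _ ->]; case: (enum_val i) => a b.
  by rewrite sym_unit_rank1 !memvB.
rewrite -card_upper_pairs -[X in (X <= _)%N](size_tuple sym_basis).
by rewrite -(eqP sym_basis_free) dimvS.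
Qed.

End SymmetricUnits.

Section OrthogonalComplement.
Variables (R : fieldType) (q : nat) (w : 'cV[R]_q.+1) (a : 'I_q.+1).
Hypothesis wa_neq0 : w a 0 != 0.

(* The q vectors w_a e_j - w_j e_a (j <> a), spanning the hyperplane
   orthogonal to w. *)
Definition perp_vec (j : 'I_q) : 'cV[R]_q.+1 :=
  w a 0 *: unit_cv (lift a j) - w (lift a j) 0 *: unit_cv a.

Lemma perp_kernel_rows {K : 'M[R]_q.+1} :
  (forall j, K *m perp_vec j = 0) ->
  forall i j, w a 0 * K i j = w j 0 * K i a.
Proof.
move=> Kperp i j; have [j' -> | ->] := unliftP a j; last by rewrite mulrC.
have := congr1 (fun v : 'cV[R]_q.+1 => v i 0) (Kperp j').
rewrite /perp_vec mulmxBr -!scalemxAr -!colE !mxE => /eqP.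
by rewrite subr_eq0 => /eqP.
Qed.

Lemma sym_perp_kernel_rank1 {K : 'M[R]_q.+1} :
  K^T = K -> (forall j, K *m perp_vec j = 0) ->
  K = (K a a / w a 0 ^+ 2) *: rank1 w.
Proof.
move=> Ksym Kperp; have rows := perp_kernel_rows Kperp.
have Kij i j : K i j = K j i by rewrite -[in RHS]Ksym mxE.
apply/matrixP => i j; rewrite !mxE big_ord1 !mxE.
have scaled : w a 0 ^+ 2 * K i j = w j 0 * w i 0 * K a a.
  by rewrite expr2 -mulrA rows mulrCA (Kij i a) rows mulrA.
apply: (mulfI (expf_neq0 2 wa_neq0)); rewrite scaled; field.
exact: wa_neq0.
Qed.

End OrthogonalComplement.
Arguments perp_vec {R q} w a j.

Lemma estimable_of_rank1_notin (R : rcfType) (q : nat)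
    (L : {vspace 'M[R]_q.+1}) (w : 'cV[R]_q.+1) :
  subspace_of_Sym L -> rank1 w \notin L -> estimable q L.
Proof.
move=> Lsym w_notin.
have [a wa_neq0] : exists a, w a 0 != 0.
  apply/existsP; apply: contraR w_notin; rewrite negb_exists => /forallP w0.
  suff -> : w = 0 by rewrite /rank1 mul0mx mem0v.
  by apply/matrixP => i j; rewrite (ord1 j) mxE; apply/eqP/negPn.
exists (perp_vec w a) => K KL Kperp.
have Keq := @sym_perp_kernel_rank1 _ _ w a wa_neq0 K (Lsym K KL) Kperp.
have [c0 | c_neq0] := eqVneq (K a a / w a 0 ^+ 2) 0.
  by rewrite Keq c0 scale0r.
case/negP: w_notin.
by rewrite -(scale1r (rank1 w)) -(mulVf c_neq0) -scalerA -Keq memvZ.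
Qed.

Theorem proposition5 (R : rcfType) (p : nat) (L : {vspace 'M[R]_p}) :
  (2 <= p)%N ->
  subspace_of_Sym L ->
  (exists K, K \in L /\ posdef K) ->
  (\dim L <= T p - T 1)%N ->
  estimable (p.-1) L.
Proof.
case: p L => [|q] L // _ Lsym _ dimL.
pose test (ab : 'I_q.+1 * 'I_q.+1) :=
  (rank1 (unit_cv ab.1 + unit_cv ab.2) \in L) && (rank1 (unit_cv ab.1) \in L).
have [all_in | /forallPn [[a b]]] := boolP [forall ab, test ab].
  have big_dim : (T q.+1 <= \dim L)%N.
    apply: rank1_units_dim => [a b | a].
      by have /andP [] := forallP all_in (a, b).
    by have /andP [] := forallP all_in (a, a).
  have T_pos : (0 < T q.+1)%N by rewrite T_bin2 bin_gt0.
  by move: (leq_trans big_dim dimL); rewrite [T 1]/T /=; lia.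
rewrite negb_and => /orP [] /estimable_of_rank1_notin; exact.
Qed.
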